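(* Let $(C_n)_{n\in\mathbb{N}}$ be a sequence of regular symmetric bodies in $\mathbb{R}^d$ converging in the Hausdorff metric to a regular symmetric body $C$. Then $\sup_{x\in\mathbb{B}^d}\|\varphi_{C_n}(x)-\varphi_C(x)\|\to0$ as $n\to\infty$.
   Context: A regular symmetric body is a compact convex $C\subset\mathbb{R}^d$ with non-empty interior, $C=-C$, that is smooth (unique supporting hyperplane at each boundary point) and strictly convex (each supporting hyperplane meets $C$ in one point). It defines the norm $\|x\|_C=\inf\{\lambda>0:x\in\lambda C\}$, and $\varphi_C(x)$ is the derivative of $\tfrac12\|\cdot\|_C^2$ at $x\ne0$, with $\varphi_C(0)=0$. $\|\cdot\|$ is the Euclidean norm and $\mathbb{B}^d$ its closed unit ball. *)

(* R^d is 'rV[R]_d for R : realType. *)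
From HB Require Import structures.
From mathcomp Require Import all_boot all_order all_algebra.
From mathcomp Require Import all_classical all_reals all_analysis.
Set Implicit Arguments. Unset Strict Implicit. Unset Printing Implicit Defensive.
Import Order.TTheory GRing.Theory Num.Theory.
Import numFieldNormedType.Exports.
Local Open Scope classical_set_scope.
Local Open Scope ring_scope.

Section Defs.
Variables (R : realType) (d : nat).
Local Notation V := 'rV[R]_d.

Definition edot (u v : V) : R := \sum_(i < d) u 0 i * v 0 i.
Definition enorm (x : V) : R := Num.sqrt (edot x x).

Definition unit_ball : set V := [set x | enorm x <= 1].

Definition enbhd (A : set V) (e : R) : set V :=
  [set x | exists2 a, A a & enorm (x - a) <= e].

Definition hausdorff_dist (A B : set V) : R :=
  inf [set e : R | 0 <= e /\ A `<=` enbhd B e /\ B `<=` enbhd A e].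

Definition convex_set (C : set V) : Prop :=
  forall x y, C x -> C y -> forall t : R, 0 <= t <= 1 ->
    C ((1 - t) *: x + t *: y).

Definition boundary (C : set V) : set V := closure C `\` interior C.

Definition supporting_normal (C : set V) (x : V) (u : V) : Prop :=
  u != 0 /\ forall y, C y -> edot u y <= edot u x.

(* smooth: unique supporting hyperplane at each boundary point *)
Definition smooth_body (C : set V) : Prop :=
  forall x, boundary C x -> forall u v,
    supporting_normal C x u -> supporting_normal C x v ->
    exists2 l : R, 0 < l & v = l *: u.

(* strictly convex: each supporting hyperplane meets C in exactly one point *)
Definition strictly_convex_body (C : set V) : Prop :=
  forall x, boundary C x -> forall u, supporting_normal C x u ->
    forall y, C y -> edot u y = edot u x -> y = x.

Definition regular_symmetric_body (C : set V) : Prop :=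
  [/\ compact C, convex_set C, interior C !=set0,
      (forall x, C x <-> C (- x)) &
      smooth_body C /\ strictly_convex_body C].

Definition gauge (C : set V) (x : V) : R :=
  inf [set l : R | 0 < l /\ exists2 c, C c & x = l *: c].

(* phi_C(x) = gradient of 1/2 ||.||_C^2 at x <> 0, phi_C(0) = 0;
   the gradient is the vector of partial derivatives. *)
Definition phi (C : set V) (x : V) : V :=
  if x == 0 then 0
  else \row_(i < d) ('D_(delta_mx 0 i : V)
                        (fun y : V => (gauge C y) ^+ 2 / 2) x).

End Defs.

From Pilot Require Import Defs.
From HB Require Import structures.
From mathcomp Require Import all_boot all_order all_algebra.
From mathcomp Require Import all_classical all_reals all_analysis.
From mathcomp Require Import unstable ring lra.
Set Implicit Arguments. Unset Strict Implicit. Unset Printing Implicit Defensive.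
Import Order.TTheory GRing.Theory Num.Theory.
Import numFieldNormedType.Exports.
Local Open Scope classical_set_scope.
Local Open Scope ring_scope.

(* For [x != 0] the entries of [phi C x] are [g x * D(x; e_i)], where [g] is the
   gauge of [C] and [D(x; w) = inf_(t > 0) (g (x + t w) - g x) / t] is its right
   directional derivative, a sublinear function of [w].  Smoothness of [C] makes
   [D(x; .)] odd, hence a genuine derivative: by a finite-dimensional Hahn-Banach
   argument, linear minorants of [D(x; .)] exact at [w] and at [-w] are supporting
   normals of [C] at [x / g x], so they coincide.
   Hausdorff convergence gives [|g_n - g| <= k_n g] with [k_n -> 0], which moves the
   difference quotient at a fixed step [t] by [O(k_n / t)]; and by Dini's theorem the
   difference quotients of [g] converge to [D] uniformly on the compact sphere
   [g = 1].  Since [D(x; w)] is invariant under positive scaling of [x], this bounds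
   [phi (C_n) - phi C] uniformly on the ball.  Geometric estimates use the max-norm
   [`|x|] of ['rV_d], compared with the Euclidean [enorm] only at the two ends. *)

Section EuclideanNorm.
Variables (R : realType) (d : nat).
Local Notation V := 'rV[R]_d.
Implicit Types (u v x : V).

Lemma mx_norm_entry v i : `|v 0 i| <= `|v|.
Proof.
rewrite [leRHS]/Num.norm /= mx_normrE; apply/bigmax_geP; right => /=.
by exists (0, i).
Qed.

Lemma mx_norm_le_entries v c : 0 <= c -> (forall i, `|v 0 i| <= c) -> `|v| <= c.
Proof.
move=> c0 H; rewrite [leLHS]/Num.norm /= mx_normrE; apply/bigmax_leP; split=> //.
by move=> [a b] _ /=; rewrite (ord1 a); exact: H.
Qed.

Lemma edotZr u a x : edot u (a *: x) = a * edot u x.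
Proof. by rewrite /edot mulr_sumr; apply: eq_bigr => i _; rewrite mxE mulrCA. Qed.

Lemma edotNr u x : edot u (- x) = - edot u x.
Proof. by rewrite /edot -sumrN; apply: eq_bigr => i _; rewrite mxE mulrN. Qed.

Lemma edotZl u a x : edot (a *: u) x = a * edot u x.
Proof. by rewrite /edot mulr_sumr; apply: eq_bigr => i _; rewrite mxE mulrA. Qed.

Lemma edot0l x : edot 0 x = 0.
Proof. by rewrite /edot big1 // => i _; rewrite mxE mul0r. Qed.

Lemma mx_norm_le_enorm v : `|v| <= enorm v.
Proof.
apply: mx_norm_le_entries; first exact: sqrtr_ge0.
move=> i; rewrite -sqrtr_sqr ler_wsqrtr //.
rewrite /edot (bigD1 i) //= -expr2 lerDl; apply: sumr_ge0 => j _.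
by rewrite -expr2 sqr_ge0.
Qed.

Lemma enorm_le_mx_norm v : enorm v <= d%:R * `|v|.
Proof.
have h : edot v v <= (d%:R * `|v|) ^+ 2.
  apply: (@le_trans _ _ (\sum_(i < d) `|v| ^+ 2)).
    apply: ler_sum => i _; rewrite -expr2 -real_normK ?num_real //.
    by rewrite lerXn2r ?nnegrE ?normr_ge0 ?mx_norm_entry.
  rewrite sumr_const card_ord exprMn -[_ *+ d]mulr_natl.
  have hd : (d%:R : R) <= d%:R ^+ 2.
    rewrite -natrX ler_nat; case: (d) => // n.
    by rewrite expnS leq_pmulr // expn_gt0.
  by apply: ler_wpM2r => //; exact: sqr_ge0.
rewrite /enorm; apply: le_trans (ler_wsqrtr h) _.
by rewrite sqrtr_sqr ger0_norm // mulr_ge0.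
Qed.

End EuclideanNorm.

Section Sublinear.
Variables (R : realType) (d : nat).
Local Notation V := 'rV[R]_d.
Implicit Types (v w y z : V) (p q : V -> R).

Definition sublinear p :=
  (forall a z, 0 < a -> p (a *: z) = a * p z) /\
  (forall y z, p (y + z) <= p y + p z).

Lemma pos_homogeneous_of_le p :
    (forall a z, 0 < a -> p (a *: z) <= a * p z) ->
  forall a z, 0 < a -> p (a *: z) = a * p z.
Proof.
move=> hle a z a0; apply/eqP; rewrite eq_le hle //=.
have := hle a^-1 (a *: z); rewrite invr_gt0 scalerA mulVf ?gt_eqF // scale1r.
by move=> /(_ a0) h; rewrite -ler_pdivlMl // mulrC.
Qed.

Lemma sublinear0 p : sublinear p -> p 0 = 0.
Proof.
move=> [hZ _]; have := hZ 2 0 (ltr0Sn _ 1); rewrite scaler0; lra.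
Qed.

Lemma sublinearZ p a z : sublinear p -> 0 <= a -> p (a *: z) = a * p z.
Proof.
move=> sp; rewrite le_eqVlt => /orP[/eqP<-|]; last exact: sp.1.
by rewrite scale0r mul0r sublinear0.
Qed.

Lemma sublinear_oppr_ge p z : sublinear p -> 0 <= p z + p (- z).
Proof. by move=> sp; rewrite -(sublinear0 sp) -(subrr z); exact: sp.2. Qed.

Lemma sublinear_sum p (I : Type) (s : seq I) (f : I -> V) : sublinear p ->
  p (\sum_(i <- s) f i) <= \sum_(i <- s) p (f i).
Proof.
move=> sp; elim: s => [|a s IH]; first by rewrite !big_nil sublinear0.
by rewrite !big_cons; apply: le_trans (sp.2 _ _) _; exact: lerD.
Qed.

(* One step of Hahn-Banach: lower [p] along the ray through [v] until it is odd at [v]. *)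
Definition linearize p v z : R :=
  inf [set y | exists2 t : R, 0 <= t & y = p (z + t *: v) - t * p v].

Section Linearize.
Variables (p : V -> R) (v : V).
Hypothesis sp : sublinear p.

Let E z := [set y | exists2 t : R, 0 <= t & y = p (z + t *: v) - t * p v].

Lemma linearize_set_lb z e : E z e -> - p (- z) <= e.
Proof.
case=> t t0 ->; have := sp.2 (z + t *: v) (- z).
rewrite [z + _ + _]addrC addKr (sublinearZ _ sp t0); lra.
Qed.

Lemma linearize_le z e : E z e -> linearize p v z <= e.
Proof.
move=> Ee; apply: ge_inf Ee.
by exists (- p (- z)) => e' /linearize_set_lb.
Qed.

Lemma linearize_ge z c : (forall e, E z e -> c <= e) -> c <= linearize p v z.
Proof.
move=> H; apply: lb_le_inf => [|e /H //].
by exists (p z); exists 0 => //; rewrite scale0r addr0 mul0r subr0.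
Qed.

Lemma linearize_le_fun z : linearize p v z <= p z.
Proof. by apply: linearize_le; exists 0 => //; rewrite scale0r addr0 mul0r subr0. Qed.

Lemma linearize_sublinear : sublinear (linearize p v).
Proof.
split.
  apply: pos_homogeneous_of_le => a z a0.
  rewrite -ler_pdivrMl //; apply: linearize_ge => e [t t0 ->].
  rewrite ler_pdivrMl //; apply: linearize_le; exists (a * t).
    by rewrite mulr_ge0 // ltW.
  by rewrite mulrBr -(sublinearZ _ sp (ltW a0)) scalerDr scalerA mulrA.
move=> y z; rewrite -lerBlDr; apply: linearize_ge => e1 [t1 t10 ->].
rewrite lerBlDr -lerBlDl; apply: linearize_ge => e2 [t2 t20 ->]; rewrite lerBlDl.
apply: (@le_trans _ _ (p (y + z + (t1 + t2) *: v) - (t1 + t2) * p v)).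
  by apply: linearize_le; exists (t1 + t2) => //; rewrite addr_ge0.
rewrite scalerDl addrACA; have := sp.2 (y + t1 *: v) (z + t2 *: v); lra.
Qed.

Lemma linearize_oppv : linearize p v (- v) = - p v.
Proof.
apply/eqP; rewrite eq_le; apply/andP; split.
  by apply: linearize_le; exists 1; rewrite // scale1r addNr mul1r sublinear0 // sub0r.
by apply: linearize_ge => e /linearize_set_lb; rewrite opprK.
Qed.

Lemma linearize_v : linearize p v v = p v.
Proof.
apply/eqP; rewrite eq_le linearize_le_fun /=.
have := sublinear_oppr_ge v linearize_sublinear; rewrite linearize_oppv; lra.
Qed.

End Linearize.

Definition odd_at p v := p (- v) = - p v.

Lemma odd_at_minorant p q v : sublinear q -> (forall z, q z <= p z) ->
  odd_at p v -> odd_at q v /\ q v = p v.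
Proof.
move=> sq qp; rewrite /odd_at => pv.
have := qp v; have := qp (- v); have := sublinear_oppr_ge v sq; rewrite pv; lra.
Qed.

Lemma odd_atZ p v a : sublinear p -> odd_at p v -> p (a *: v) = a * p v.
Proof.
move=> sp pv; have [a0|a0] := leP 0 a; first exact: sublinearZ.
rewrite -[a]opprK scaleNr -scalerN sublinearZ ?pv ?mulrNN ?opprK //.
by rewrite oppr_ge0 ltW.
Qed.

Lemma sublinear_odd_edot p : sublinear p ->
    (forall i, odd_at p (delta_mx 0 i)) ->
  forall z, p z = edot (\row_i p (delta_mx 0 i)) z.
Proof.
move=> sp pe.
have le_edot z : p z <= edot (\row_i p (delta_mx 0 i)) z.
  rewrite {1}(row_sum_delta z); apply: le_trans (sublinear_sum _ _ sp) _.
  rewrite /edot le_eqVlt; apply/orP; left; apply/eqP; apply: eq_bigr => i _.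
  by rewrite odd_atZ // mxE mulrC.
move=> z; have := le_edot (- z); rewrite edotNr.
have := sublinear_oppr_ge z sp; have := le_edot z; lra.
Qed.

Lemma sublinear_odd_minorant p w (k : nat) : sublinear p -> (k <= d)%N ->
  exists q, [/\ sublinear q, forall z, q z <= p z, q w = p w, odd_at q w &
     forall i : 'I_d, (i < k)%N -> odd_at q (delta_mx 0 i)].
Proof.
move=> sp; elim: k => [_|k IH kd].
  exists (linearize p w); split => //.
  - exact: linearize_sublinear.
  - exact: linearize_le_fun.
  - exact: linearize_v.
  - by rewrite /odd_at linearize_oppv // linearize_v.
have [q [sq qp qw qodd qe]] := IH (ltnW kd).
pose e : V := delta_mx 0 (Ordinal kd).
have sr := linearize_sublinear e sq; have rq := linearize_le_fun e sq.
have [rodd rw] := odd_at_minorant sr rq qodd.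
exists (linearize q e); split => //.
- by move=> z; apply: le_trans (rq z) (qp z).
- by rewrite rw.
- move=> i; rewrite ltnS leq_eqVlt => /orP[/eqP ik|ik].
    have -> : i = Ordinal kd by apply: val_inj.
    by rewrite /odd_at linearize_oppv // linearize_v.
  by case: (odd_at_minorant sr rq (qe i ik)).
Qed.

Lemma hahn_banach p w : sublinear p ->
  exists u : V, (forall z, edot u z <= p z) /\ edot u w = p w.
Proof.
move=> sp; have [q [sq qp qw _ qe]] := sublinear_odd_minorant w sp (leqnn d).
have q_edot := sublinear_odd_edot sq (fun i => qe i (ltn_ord i)).
by exists (\row_i q (delta_mx 0 i)); split=> [z|]; rewrite -q_edot.
Qed.

End Sublinear.

Section Gauge.
Variables (R : realType) (d : nat).
Local Notation V := 'rV[R]_d.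
Implicit Types (x y : V).
Variables (C : set V) (r M : R).
Hypotheses (r_gt0 : 0 < r) (C_ball : forall z, `|z| < r -> C z).
Hypothesis C_convex : Defs.convex_set C.
Hypotheses (M_gt0 : 0 < M) (C_bounded : forall c, C c -> `|c| <= M).

Local Notation g := (gauge C).
Let G x := [set l : R | 0 < l /\ exists2 c, C c & x = l *: c].

Lemma gauge_le x l : G x l -> g x <= l.
Proof. by move=> Gl; apply: ge_inf Gl; exists 0 => l' [l0 _]; exact: ltW. Qed.

Lemma gauge_le1 (c : V) : C c -> g c <= 1.
Proof. by move=> Cc; apply: gauge_le; split=> //; exists c; rewrite ?scale1r. Qed.

Lemma gauge_set_gt x l : `|x| / r < l -> G x l.
Proof.
move=> lx; have l0 : 0 < l by apply: le_lt_trans lx; rewrite divr_ge0 // ltW.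
split=> //; exists (l^-1 *: x); last by rewrite scalerA mulfV ?gt_eqF // scale1r.
apply: C_ball; rewrite normrZ ger0_norm ?invr_ge0 ?ltW // mulrC.
by rewrite ltr_pdivrMr // mulrC -ltr_pdivrMr.
Qed.

Lemma gauge_ge x (b : R) : (forall l, G x l -> b <= l) -> b <= g x.
Proof.
move=> H; apply: lb_le_inf => [|l /H //].
by exists (`|x| / r + 1); apply: gauge_set_gt; rewrite ltrDl.
Qed.

Lemma gauge_ge0 x : 0 <= g x.
Proof. by apply: gauge_ge => l [l0 _]; exact: ltW. Qed.

Lemma gauge0 : g 0 = 0.
Proof.
apply/eqP; rewrite eq_le gauge_ge0 andbT; apply/ler_gtP => l l0.
by apply: gauge_le; apply: gauge_set_gt; rewrite normr0 mul0r.
Qed.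

Lemma gauge_le_norm x : g x <= `|x| / r.
Proof. by apply/ler_gtP => l lx; apply: gauge_le; exact: gauge_set_gt. Qed.

Lemma gaugeZ a x : 0 < a -> g (a *: x) = a * g x.
Proof.
apply: pos_homogeneous_of_le => {}a {}x a0.
rewrite mulrC -ler_pdivrMr //; apply: gauge_ge => l [l0 [c Cc ->]].
rewrite ler_pdivrMr //; apply: gauge_le; split; first by rewrite mulr_gt0.
by exists c => //; rewrite scalerA mulrC.
Qed.

Lemma gauge_lt1 x : g x < 1 -> C x.
Proof.
move=> /(inf_lt _)[|l [l0 [c Cc ->]] l1].
  by exists (`|x| / r + 1); apply: gauge_set_gt; rewrite ltrDl.
have C0 : C 0 by apply: C_ball; rewrite normr0.
by have := C_convex C0 Cc (_ : 0 <= l <= 1); rewrite scaler0 add0r; apply; rewrite !ltW.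
Qed.

Lemma ler_gaugeD x y : g (x + y) <= g x + g y.
Proof.
rewrite -lerBlDr; apply: gauge_ge => l1 [l10 [c1 C1 ->]]; rewrite lerBlDr -lerBlDl.
apply: gauge_ge => l2 [l20 [c2 C2 ->]]; rewrite lerBlDl.
have l0 : 0 < l1 + l2 by rewrite addr_gt0.
apply: gauge_le; split => //.
exists ((1 - l2 / (l1 + l2)) *: c1 + (l2 / (l1 + l2)) *: c2).
  apply: C_convex => //; apply/andP; split; first by rewrite divr_ge0 // ltW.
  by rewrite ler_pdivrMr // mul1r lerDr ltW.
by rewrite scalerDr !scalerA; congr (_ *: _ + _ *: _); field; rewrite gt_eqF.
Qed.

Lemma gauge_sublinear : sublinear g.
Proof. by split; [exact: gaugeZ | exact: ler_gaugeD]. Qed.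

Lemma gauge_lipschitz x y : `|g x - g y| <= `|x - y| / r.
Proof.
have := ler_gaugeD y (x - y); have := ler_gaugeD x (y - x).
rewrite !(addrC _ (_ - _)) !subrK.
have := gauge_le_norm (x - y); have := gauge_le_norm (y - x).
rewrite distrC ler_norml; lra.
Qed.

Lemma gauge_ge_norm x : `|x| / M <= g x.
Proof.
apply: gauge_ge => l [l0 [c Cc ->]]; rewrite normrZ ger0_norm; last exact: ltW.
by rewrite ler_pdivrMr // ler_wpM2l ?C_bounded // ltW.
Qed.

Lemma gauge_gt0 x : x != 0 -> 0 < g x.
Proof.
by move=> x0; apply: lt_le_trans (gauge_ge_norm x); rewrite divr_gt0 ?normr_gt0.
Qed.

End Gauge.

Section DirectionalDerivative.
Variables (R : realType) (d : nat).
Local Notation V := 'rV[R]_d.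
Implicit Types (w x : V).

Definition diff_quot (g : V -> R) x w (t : R) := (g (x + t *: w) - g x) / t.

(* The right derivative: for sublinear [g] the quotients decrease as [t] decreases
   ([diff_quot_mono]), so their infimum is their limit at [0+]. *)
Definition dir_deriv (g : V -> R) x w :=
  inf [set y | exists2 t : R, 0 < t & y = diff_quot g x w t].

Variable g : V -> R.
Hypothesis g_sublinear : sublinear g.
Let gZ := g_sublinear.1.
Let gD := g_sublinear.2.

Lemma diff_quot_mono x w s t : 0 < s -> s <= t -> diff_quot g x w s <= diff_quot g x w t.
Proof.
move=> s0; rewrite le_eqVlt => /orP[/eqP->//|st].
have t0 : 0 < t by apply: lt_trans st.
set k := s / t.
have k0 : 0 < k by rewrite divr_gt0.
have k1 : 0 < 1 - k by rewrite subr_gt0 ltr_pdivrMr // mul1r.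
have convex_comb : x + s *: w = (1 - k) *: x + k *: (x + t *: w).
  rewrite scalerDr scalerA /k mulfVK ?gt_eqF // scalerBl scale1r.
  by rewrite addrA subrK.
have h : g (x + s *: w) <= (1 - k) * g x + k * g (x + t *: w).
  by rewrite convex_comb; apply: le_trans (gD _ _) _; rewrite (gZ _ k1) (gZ _ k0).
rewrite /diff_quot.
have -> : (g (x + t *: w) - g x) / t = (k * (g (x + t *: w) - g x)) / s.
  by rewrite /k; field; rewrite !gt_eqF.
by apply: ler_wpM2r; [rewrite invr_ge0 ltW | lra].
Qed.

Lemma diff_quot_ge x w t : 0 < t -> - g (- w) <= diff_quot g x w t.
Proof.
move=> t0; rewrite /diff_quot ler_pdivlMr //.
have := gD (x + t *: w) (t *: (- w)); rewrite (gZ _ t0) scalerN addrK; lra.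
Qed.

Lemma dir_deriv_le x w t : 0 < t -> dir_deriv g x w <= diff_quot g x w t.
Proof.
move=> t0; apply: ge_inf; last by exists t.
by exists (- g (- w)) => y [s s0 ->]; exact: diff_quot_ge.
Qed.

Lemma dir_deriv_ge x w c :
  (forall t, 0 < t -> c <= diff_quot g x w t) -> c <= dir_deriv g x w.
Proof.
move=> H; apply: lb_le_inf => [|y [t t0 ->]]; last exact: H.
by exists (diff_quot g x w 1); exists 1.
Qed.

Lemma dir_deriv_ge_opp x w : - g (- w) <= dir_deriv g x w.
Proof. by apply: dir_deriv_ge => t t0; exact: diff_quot_ge. Qed.

Lemma dir_deriv_approx x w e : 0 < e ->
  exists2 t, 0 < t & diff_quot g x w t < dir_deriv g x w + e.
Proof.
move=> e0; have : dir_deriv g x w < dir_deriv g x w + e by rewrite ltrDl.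
move=> /(inf_lt _)[|y [t t0 ->] h]; last by exists t.
by exists (diff_quot g x w 1); exists 1.
Qed.

Lemma dir_deriv_le_fun x w : dir_deriv g x w <= g w.
Proof.
apply: le_trans (dir_deriv_le x w ltr01) _.
by rewrite /diff_quot scale1r divr1 lerBlDl; exact: gD.
Qed.

Lemma dir_deriv_norm_le x w L : g w <= L -> g (- w) <= L -> `|dir_deriv g x w| <= L.
Proof.
move=> gw gNw; have := dir_deriv_le_fun x w; have := dir_deriv_ge_opp x w.
by rewrite ler_norml => ? ?; apply/andP; split; lra.
Qed.

Lemma diff_quotD x w1 w2 t : 0 < t ->
  diff_quot g x (w1 + w2) t <= diff_quot g x w1 (2 * t) + diff_quot g x w2 (2 * t).
Proof.
move=> t0; rewrite /diff_quot.
have h2 : 0 < 2^-1 :> R by rewrite invr_gt0.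
have midpoint : x + t *: (w1 + w2) =
    2^-1 *: (x + (2 * t) *: w1) + 2^-1 *: (x + (2 * t) *: w2).
  by apply/rowP => i; rewrite !mxE; field.
have h : g (x + t *: (w1 + w2)) <=
    2^-1 * g (x + (2 * t) *: w1) + 2^-1 * g (x + (2 * t) *: w2).
  by rewrite midpoint -!gZ // gD.
have -> : (g (x + (2 * t) *: w1) - g x) / (2 * t) +
          (g (x + (2 * t) *: w2) - g x) / (2 * t) =
  (2^-1 * g (x + (2 * t) *: w1) + 2^-1 * g (x + (2 * t) *: w2) - g x) / t.
  by field; rewrite gt_eqF.
by apply: ler_wpM2r; [rewrite invr_ge0 ltW | lra].
Qed.

Lemma dir_deriv_sublinear x : sublinear (dir_deriv g x).
Proof.
split.
  apply: pos_homogeneous_of_le => a w a0.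
  rewrite mulrC -ler_pdivrMr //; apply: dir_deriv_ge => t t0.
  rewrite ler_pdivrMr //; apply: le_trans (dir_deriv_le _ _ (_ : 0 < t / a)) _.
    by rewrite divr_gt0.
  rewrite /diff_quot scalerA mulfVK ?gt_eqF // le_eqVlt; apply/orP; left.
  by apply/eqP; field; rewrite !gt_eqF.
move=> w1 w2; rewrite -lerBlDr; apply: dir_deriv_ge => t1 t10.
rewrite lerBlDr -lerBlDl; apply: dir_deriv_ge => t2 t20; rewrite lerBlDl.
set m := Num.min t1 t2.
have m0 : 0 < m by rewrite lt_min t10 t20.
have m2 : 0 < m / 2 by rewrite divr_gt0.
apply: le_trans (dir_deriv_le _ _ m2) _; apply: le_trans (diff_quotD _ _ _ m2) _.
rewrite mulrC divfK ?pnatr_eq0 //.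
by apply: lerD; apply: diff_quot_mono => //; rewrite /m ?ge_min ?lexx ?orbT.
Qed.

Lemma dir_deriv_self x : dir_deriv g x x = g x.
Proof.
have quot_self t : 0 < t -> diff_quot g x x t = g x.
  move=> t0; rewrite /diff_quot -{1}(scale1r x) -scalerDl gZ ?addr_gt0 //.
  by field; rewrite gt_eqF.
apply/eqP; rewrite eq_le; apply/andP; split.
  by rewrite -(quot_self 1 ltr01) dir_deriv_le.
by apply: dir_deriv_ge => t t0; rewrite quot_self.
Qed.

Lemma dir_deriv_oppself x : dir_deriv g x (- x) = - g x.
Proof.
apply/eqP; rewrite eq_le; apply/andP; split; last first.
  by have := dir_deriv_ge_opp x (- x); rewrite opprK.
have h2 : 0 < 2^-1 :> R by rewrite invr_gt0.
apply: le_trans (dir_deriv_le _ _ h2) _; rewrite /diff_quot.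
have -> : x + 2^-1 *: - x = 2^-1 *: x by apply/rowP => i; rewrite !mxE; field.
by rewrite (gZ _ h2) le_eqVlt; apply/orP; left; apply/eqP; field.
Qed.

Lemma dir_deriv_scale x w a : 0 < a -> dir_deriv g (a *: x) w = dir_deriv g x w.
Proof.
move=> a0; apply/eqP; rewrite eq_le; apply/andP; split.
  apply: dir_deriv_ge => t t0; have at0 : 0 < a * t by rewrite mulr_gt0.
  apply: le_trans (dir_deriv_le _ _ at0) _.
  rewrite /diff_quot -scalerA -scalerDr gZ // le_eqVlt; apply/orP; left.
  by rewrite (gZ (x + _) a0); apply/eqP; field; rewrite !gt_eqF.
apply: dir_deriv_ge => t t0; have at0 : 0 < t / a by rewrite divr_gt0.
apply: le_trans (dir_deriv_le _ _ at0) _.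
rewrite /diff_quot (_ : a *: x + t *: w = a *: (x + (t / a) *: w)); last first.
  by rewrite scalerDr scalerA mulrC divfK ?gt_eqF.
rewrite !gZ // le_eqVlt; apply/orP; left.
by apply/eqP; field; rewrite !gt_eqF.
Qed.

End DirectionalDerivative.

Lemma dir_deriv_le_perturb (R : realType) (d : nat) (g gn : 'rV[R]_d -> R) (k : R)
    (y w : 'rV[R]_d) (t : R) :
  sublinear gn -> 0 < t -> (forall z, `|gn z - g z| <= k * g z) ->
  dir_deriv gn y w <= diff_quot g y w t + k * (g (y + t *: w) + g y) / t.
Proof.
move=> gn_sublinear t0 close; apply: le_trans (dir_deriv_le gn_sublinear y w t0) _.
rewrite /diff_quot -mulrDl ler_pM2r ?invr_gt0 //.
have := close (y + t *: w); have := close y.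
by rewrite !ler_norml => /andP[? ?] /andP[? ?]; lra.
Qed.

Section RegularBody.
Variables (R : realType) (d : nat).
Local Notation V := 'rV[R]_d.
Implicit Types (w x y z : V).
Variable C : set V.
Hypothesis C_body : regular_symmetric_body C.
Local Notation g := (gauge C).

Lemma body_convex : Defs.convex_set C.
Proof. by case: C_body. Qed.

(* Symmetry and convexity center the interior ball at the origin. *)
Lemma body_ball : exists2 r : R, 0 < r & forall z, `|z| < r -> C z.
Proof.
case: C_body => _ C_convex [p /nbhs_normP[e e0 pe]] C_sym _.
exists e => // z ze.
have Cpz : C (p + z) by apply: pe => /=; rewrite opprD addNKr normrN.
have Cmpz : C (- p + z).
  by rewrite C_sym opprD opprK; apply: pe => /=; rewrite opprB addrC subrK.
have := C_convex _ _ Cpz Cmpz 2^-1.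
rewrite (_ : (1 - 2^-1) *: (p + z) + 2^-1 *: (- p + z) = z).
  by apply; rewrite invr_ge0 ler0n /= invf_le1 ?ler1n.
by apply/rowP => i; rewrite !mxE; field.
Qed.

Lemma body_bounded : exists2 M : R, 0 < M & forall c, C c -> `|c| <= M.
Proof.
case: C_body => /compact_bounded [M0 [_ HM]] _ _ _ _.
exists (`|M0| + 1); first by rewrite ltr_wpDl.
by apply: HM; rewrite (le_lt_trans (ler_norm _)) // ltrDl.
Qed.

Lemma body_gauge_sublinear : sublinear g.
Proof. by have [r r0 Cr] := body_ball; exact: gauge_sublinear r0 Cr body_convex. Qed.

Lemma body_gauge_gt0 x : x != 0 -> 0 < g x.
Proof.
have [r r0 Cr] := body_ball; have [M M0 CM] := body_bounded.
exact: gauge_gt0 r0 Cr M0 CM x.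
Qed.

Lemma gauge_normalize x : x != 0 -> g ((g x)^-1 *: x) = 1.
Proof.
move=> x0; have gx := body_gauge_gt0 x0.
by rewrite body_gauge_sublinear.1 ?invr_gt0 // mulVf ?gt_eqF.
Qed.

Lemma gauge_eq1_boundary y : g y = 1 -> boundary C y.
Proof.
move=> gy; have [r r0 Cr] := body_ball.
have gZ := body_gauge_sublinear.1.
have [y0 y_gt0] : y != 0 /\ 0 < `|y|.
  suff y0 : y != 0 by rewrite normr_gt0.
  by apply: contra_eq_neq gy => ->; rewrite (gauge0 r0 Cr) eq_sym oner_eq0.
pose s e := e / (2 * (`|y| + e)).
have s_gt0 e : 0 < e -> 0 < s e by move=> e0; rewrite divr_gt0 ?mulr_gt0 ?addr_gt0.
have sy_lt e : 0 < e -> s e * `|y| < e.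
  move=> e0; rewrite mulrAC ltr_pdivrMr ?mulr_gt0 ?addr_gt0 //; nra.
split.
- move=> B /nbhs_normP[e /= e0 eB]; exists ((1 - s e) *: y); split.
    apply: (gauge_lt1 r0 Cr body_convex); rewrite gZ ?gy ?mulr1.
      by rewrite ltrBlDr ltrDl s_gt0.
    by rewrite subr_gt0 ltr_pdivrMr ?mulr_gt0 ?addr_gt0 // mul1r; lra.
  apply: eB => /=; rewrite scalerBl scale1r opprB addrC subrK normrZ.
  by rewrite gtr0_norm ?s_gt0 ?sy_lt.
- move=> /nbhs_normP[e /= e0 eB].
  have : C ((1 + s e) *: y).
    apply: eB => /=; rewrite scalerDl scale1r opprD addrA subrr sub0r normrN normrZ.
    by rewrite gtr0_norm ?s_gt0 ?sy_lt.
  move=> /gauge_le1; rewrite gZ ?gy ?mulr1 ?addr_gt0 ?s_gt0 //.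
  by rewrite gerDl leNgt s_gt0.
Qed.

Lemma dir_deriv_gaugeN x w : x != 0 -> dir_deriv g x (- w) = - dir_deriv g x w.
Proof.
move=> x0; have gx := body_gauge_gt0 x0.
have gs := body_gauge_sublinear.
set y := (g x)^-1 *: x.
have y_boundary := gauge_eq1_boundary (gauge_normalize x0).
have normal u : (forall z, edot u z <= dir_deriv g x z) ->
    supporting_normal C y u /\ edot u y = 1.
  move=> uD.
  have ux : edot u x = g x.
    apply/eqP; rewrite eq_le; have := uD x; rewrite dir_deriv_self // => -> /=.
    by have := uD (- x); rewrite dir_deriv_oppself // edotNr; lra.
  have uy : edot u y = 1 by rewrite /y edotZr ux mulVf ?gt_eqF.
  split=> //; split.
    by apply: contra_eq_neq uy => ->; rewrite edot0l eq_sym oner_eq0.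
  move=> c Cc; rewrite uy; apply: le_trans (uD c) _.
  by apply: le_trans (dir_deriv_le_fun gs x c) _; exact: gauge_le1.
have [u1 [u1D u1w]] := hahn_banach w (dir_deriv_sublinear gs x).
have [u2 [u2D u2w]] := hahn_banach (- w) (dir_deriv_sublinear gs x).
have [n1 u1y] := normal u1 u1D; have [n2 u2y] := normal u2 u2D.
have [l l0 u21] : exists2 l : R, 0 < l & u2 = l *: u1.
  by case: C_body => _ _ _ _ [C_smooth _]; exact: C_smooth n1 n2.
have l1 : l = 1 by move: u2y; rewrite u21 edotZl u1y mulr1.
by rewrite -u2w -u1w u21 l1 scale1r edotNr.
Qed.

Lemma gauge_continuous : continuous g.
Proof.
have [r r0 Cr] := body_ball.
move=> x; have x_pfilter : ProperFilter (nbhs x) by exact: nbhs_pfilter.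
apply/(@cvgrPdist_le _ _ _ (nbhs x) x_pfilter) => e e0; apply/nbhs_ballP.
exists (e * r); first by rewrite /= mulr_gt0.
move=> z; rewrite -ball_normE /= => xz.
apply: le_trans (gauge_lipschitz r0 Cr body_convex x z) _.
by rewrite ler_pdivrMr // ltW.
Qed.

Lemma diff_quot_gauge_cvg x w : x != 0 ->
  (fun h : R => (g (h *: w + x) - g x) / h) @ 0^' --> dir_deriv g x w.
Proof.
move=> x0; have gs := body_gauge_sublinear.
apply/cvgrPdist_le => e e0.
have [t1 t10 ht1] := dir_deriv_approx g x w e0.
have [t2 t20 ht2] := dir_deriv_approx g x (- w) e0.
rewrite (dir_deriv_gaugeN w x0) in ht2.
near=> h.
have h0 : h != 0 by near: h; exact: nbhs_dnbhs_neq.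
have : `|h| < Num.min t1 t2 by near: h; apply: dnbhs0_lt; rewrite lt_min t10 t20.
rewrite lt_min => /andP[h1 h2].
have [h_gt0|h_le0] := ltP 0 h.
  rewrite [h *: w + x]addrC -/(diff_quot g x w h).
  have D_le := dir_deriv_le gs x w h_gt0.
  have mono := diff_quot_mono gs x w h_gt0 (ltW (le_lt_trans (ler_norm h) h1)).
  by rewrite ler_norml; apply/andP; split; lra.
have h_lt0 : h < 0 by rewrite lt_neqAle h0.
have hN0 : 0 < - h by rewrite oppr_gt0.
have -> : (g (h *: w + x) - g x) / h = - diff_quot g x (- w) (- h).
  rewrite /diff_quot (_ : x + (- h) *: (- w) = h *: w + x); last first.
    by rewrite scaleNr scalerN opprK addrC.
  by rewrite invrN mulrN; apply/esym; exact: opprK.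
have D_le := dir_deriv_le gs x (- w) hN0.
have hN : - h < t2 by rewrite -ltr0_norm.
have mono := diff_quot_mono gs x (- w) hN0 (ltW hN).
rewrite (dir_deriv_gaugeN w x0) in D_le.
by rewrite ler_norml; apply/andP; split; lra.
Unshelve. all: by end_near.
Qed.

Lemma derive_half_sq_gauge x w : x != 0 ->
  'D_w (fun y : V => g y ^+ 2 / 2) x = g x * dir_deriv g x w.
Proof.
move=> x0; have [r r0 Cr] := body_ball.
have g_cvg : (fun h : R => g (h *: w + x)) @ 0^' --> g x.
  apply/cvgrPdist_le => e e0; near=> h.
  apply: le_trans (gauge_lipschitz r0 Cr body_convex x (h *: w + x)) _.
  rewrite [h *: w + x]addrC opprD addrA subrr sub0r normrN normrZ ler_pdivrMr //.
  have : `|h| <= e * r / (`|w| + 1).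
    by near: h; apply: dnbhs0_le; rewrite divr_gt0 ?mulr_gt0 ?ltr_wpDl.
  by rewrite ler_pdivlMr ?ltr_wpDl //; have := normr_ge0 h; nra.
rewrite /derive.
have -> : (fun h : R => h^-1 *: (((fun y : V => g y ^+ 2 / 2) \o shift x) (h *: w)
            - g x ^+ 2 / 2)) =
          (fun h => (g (h *: w + x) + g x) / 2 * ((g (h *: w + x) - g x) / h)).
  by apply: funext => h /=; rewrite -[h^-1 *: _]/(h^-1 * _); ring.
apply: cvg_lim; first exact: norm_hausdorff.
have -> : g x * dir_deriv g x w = (g x + g x) / 2 * dir_deriv g x w.
  by congr (_ * _); field.
apply: cvgM; last exact: diff_quot_gauge_cvg.
by apply: cvgM; [apply: cvgD; [exact: g_cvg | exact: cvg_cst] | exact: cvg_cst].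
Unshelve. all: by end_near.
Qed.

Lemma phi_gauge_entry x i : x != 0 ->
  phi C x 0 i = g x * dir_deriv g x (delta_mx 0 i).
Proof. by move=> x0; rewrite /phi (negbTE x0) mxE derive_half_sq_gauge. Qed.

Lemma gauge_sphere_compact : compact [set y | g y = 1].
Proof.
have [M M0 CM] := body_bounded; have [r r0 Cr] := body_ball.
apply: bounded_closed_compact.
  exists M; split; first exact: num_real.
  move=> M' MM' y /= gy; apply: ltW; apply: le_lt_trans MM'.
  by have := gauge_ge_norm r0 Cr M0 CM y; rewrite gy ler_pdivrMr // mul1r.
rewrite (_ : [set y | g y = 1] = g @^-1` [set 1]) //.
apply: preimage_closed; first by move=> y _; exact: gauge_continuous.
by apply: accessible_closed_set1; apply: hausdorff_accessible; exact: norm_hausdorff.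
Qed.

Lemma diff_quot_gauge_near y w t e : 0 < t -> 0 < e ->
  \forall y' \near y, `|diff_quot g y' w t - diff_quot g y w t| <= e.
Proof.
move=> t0 e0; have [r r0 Cr] := body_ball.
have lip := gauge_lipschitz r0 Cr body_convex.
apply/nbhs_normP; exists (e * t / 2 * r); first by rewrite /= !mulr_gt0.
move=> y' /=; rewrite distrC -ltr_pdivrMr // => yy'.
rewrite /diff_quot -mulrBl normrM (gtr0_norm (_ : 0 < t^-1)) ?invr_gt0 // ler_pdivrMr //.
have := lip (y' + t *: w) (y + t *: w); have := lip y' y.
rewrite (_ : y' + t *: w - (y + t *: w) = y' - y); last first.
  by rewrite opprD addrACA subrr addr0.
by rewrite !ler_norml => /andP[a1 a2] /andP[b1 b2]; apply/andP; split; lra.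
Qed.

Lemma dir_deriv_gauge_usc y w e : 0 < e ->
  \forall y' \near y, dir_deriv g y' w <= dir_deriv g y w + e.
Proof.
move=> e0; have e2 : 0 < e / 2 by rewrite divr_gt0.
have [s s0 hs] := dir_deriv_approx g y w e2.
near=> y'.
have := dir_deriv_le body_gauge_sublinear y' w s0.
have : `|diff_quot g y' w s - diff_quot g y w s| <= e / 2.
  by near: y'; exact: diff_quot_gauge_near.
by rewrite ler_norml => /andP[_ h]; lra.
Unshelve. all: by end_near.
Qed.

(* Lower semicontinuity comes for free from oddness in the direction. *)
Lemma dir_deriv_gauge_lsc y w e : y != 0 -> 0 < e ->
  \forall y' \near y, dir_deriv g y w <= dir_deriv g y' w + e.
Proof.
move=> y0 e0; near=> y'.
have y'0 : y' != 0.
  near: y'; apply/nbhs_ballP; exists `|y|; first by rewrite /= normr_gt0.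
  by move=> z; rewrite -ball_normE /=; apply: contraTneq => ->; rewrite subr0 ltxx.
have : dir_deriv g y' (- w) <= dir_deriv g y (- w) + e.
  by near: y'; exact: dir_deriv_gauge_usc.
by rewrite !dir_deriv_gaugeN //; lra.
Unshelve. all: by end_near.
Qed.

(* Dini's theorem on the compact unit sphere of the gauge. *)
Lemma diff_quot_gauge_unif w e : 0 < e -> \forall t \near 0^'+,
  forall y, g y = 1 -> diff_quot g y w t <= dir_deriv g y w + e.
Proof.
move=> e0; have gs := body_gauge_sublinear.
apply: filterS ((compact_near_coveringP _).1 gauge_sphere_compact _ _
  (fun t y => diff_quot g y w t <= dir_deriv g y w + e) _ _) => [t Ht y /Ht //|].
move=> y /= gy.
have y0 : y != 0.
  by apply: contra_eq_neq gy => ->; rewrite sublinear0 // eq_sym oner_eq0.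
have e3 : 0 < e / 3 by rewrite divr_gt0.
have [t0 t00 ht0] := dir_deriv_approx g y w e3.
near=> y' t.
have t_gt0 : 0 < t by near: t; exact: nbhs_right_gt.
have t_lt : t <= t0 by near: t; exact: nbhs_right_ltW.
have := diff_quot_mono gs y' w t_gt0 t_lt.
have : `|diff_quot g y' w t0 - diff_quot g y w t0| <= e / 3.
  by near: y'; exact: diff_quot_gauge_near.
have : dir_deriv g y w <= dir_deriv g y' w + e / 3.
  by near: y'; exact: dir_deriv_gauge_lsc.
by rewrite ler_norml => ? /andP[_ ?] ?; lra.
Unshelve. all: by end_near.
Qed.

End RegularBody.

Section HausdorffGauge.
Variables (R : realType) (d : nat).
Local Notation V := 'rV[R]_d.
Implicit Types (x z : V).

Lemma gauge_le_of_approx (A B : set V) (rA rB e : R) :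
  0 < rA -> (forall z, `|z| < rA -> A z) ->
  0 < rB -> (forall z, `|z| < rB -> B z) -> Defs.convex_set B -> 0 <= e ->
  (forall a, A a -> exists2 b, B b & `|a - b| <= e) ->
  forall x, gauge B x <= (1 + e / rB) * gauge A x.
Proof.
move=> rA0 ArA rB0 BrB B_convex e0 AB x.
have k0 : 0 < 1 + e / rB by rewrite ltr_wpDr // divr_ge0 // ltW.
rewrite mulrC -ler_pdivrMr //; apply: (gauge_ge rA0 ArA) => l [l0 [a Aa ->]].
rewrite ler_pdivrMr // (gaugeZ rB0 BrB _ l0) ler_pM2l //.
have [b Bb ab] := AB a Aa.
have := ler_gaugeD rB0 BrB B_convex b (a - b); rewrite addrCA subrr addr0 => h.
apply: le_trans h _; apply: lerD; first exact: gauge_le1.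
apply: le_trans (gauge_le_norm rB0 BrB _) _.
by apply: ler_wpM2r => //; rewrite invr_ge0 ltW.
Qed.

Lemma gauge_le_of_bound (A B : set V) (rA rB S : R) :
  0 < rA -> (forall z, `|z| < rA -> A z) ->
  0 < rB -> (forall z, `|z| < rB -> B z) -> Defs.convex_set B ->
  (forall b, B b -> gauge A b <= S) ->
  forall x t, gauge B x < t -> gauge A x <= t * S.
Proof.
move=> rA0 ArA rB0 BrB B_convex gS x t tx.
have t0 : 0 < t by apply: le_lt_trans tx; exact: (gauge_ge0 rB0 BrB).
have ti : 0 < t^-1 by rewrite invr_gt0.
rewrite -ler_pdivrMl // -(gaugeZ rA0 ArA _ ti); apply: gS.
apply: (gauge_lt1 rB0 BrB B_convex).
by rewrite (gaugeZ rB0 BrB _ ti) mulrC ltr_pdivrMr // mul1r.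
Qed.

Lemma gauge_ge_of_approx (A B : set V) (rA rB MB e l : R) :
  0 < rA -> (forall z, `|z| < rA -> A z) -> Defs.convex_set A ->
  0 < rB -> (forall z, `|z| < rB -> B z) -> Defs.convex_set B ->
  (forall b, B b -> `|b| <= MB) ->
  0 < l -> l < 1 -> e < l * rB ->
  (forall b, B b -> exists2 a, A a & `|b - a| <= e) ->
  forall x, gauge A x <= gauge B x / (1 - l).
Proof.
move=> rA0 ArA A_convex rB0 BrB B_convex BMB l0 l1 el BA x.
set S := sup [set gauge A b | b in B].
have S_ne : [set gauge A b | b in B] !=set0.
  by exists (gauge A 0); exists 0 => //; apply: BrB; rewrite normr0.
have S_has_sup : has_sup [set gauge A b | b in B].
  split=> //; exists (MB / rA) => _ [b Bb <-].
  apply: le_trans (gauge_le_norm rA0 ArA b) _.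
  by apply: ler_wpM2r; [rewrite invr_ge0 ltW | exact: BMB].
have gS b : B b -> gauge A b <= S.
  by move=> Bb; apply: sup_upper_bound => //; exists b.
(* [B] lies in [A + l B], hence [S <= 1 + l S]. *)
have S1 : S * (1 - l) <= 1.
  rewrite mulrBr mulr1 lerBlDr [S * l]mulrC; apply: ge_sup => // _ [b Bb <-].
  have [a Aa ba] := BA b Bb.
  have := ler_gaugeD rA0 ArA A_convex a (b - a); rewrite addrCA subrr addr0 => h.
  apply: le_trans h _; apply: lerD; first exact: gauge_le1.
  have -> : b - a = l *: (l^-1 *: (b - a)) by rewrite scalerA mulfV ?gt_eqF // scale1r.
  rewrite (gaugeZ rA0 ArA _ l0) ler_pM2l //; apply: gS; apply: BrB.
  rewrite normrZ gtr0_norm ?invr_gt0 // mulrC ltr_pdivrMr //.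
  by apply: le_lt_trans ba _; rewrite mulrC.
have l10 : 0 < 1 - l by rewrite subr_gt0.
rewrite ler_pdivlMr //; apply/ler_gtP => t tx.
apply: le_trans (ler_wpM2r (ltW l10) (gauge_le_of_bound rA0 ArA rB0 BrB B_convex gS tx)) _.
have t0 : 0 <= t by exact: ltW (le_lt_trans (gauge_ge0 rB0 BrB x) tx).
by rewrite -mulrA ler_piMr.
Qed.

Lemma hausdorff_dist_lt_approx (A B : set V) (MA MB delta : R) :
  A 0 -> B 0 -> (forall a, A a -> `|a| <= MA) -> (forall b, B b -> `|b| <= MB) ->
  hausdorff_dist A B < delta ->
  exists e : R, [/\ 0 <= e, e < delta,
    (forall a, A a -> exists2 b, B b & `|a - b| <= e) &
    (forall b, B b -> exists2 a, A a & `|b - a| <= e)].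
Proof.
move=> A0 B0 AMA BMB hH.
have MA0 : 0 <= MA by have := AMA 0 A0; rewrite normr0.
have MB0 : 0 <= MB by have := BMB 0 B0; rewrite normr0.
have H_ne : [set e : R | 0 <= e /\ A `<=` enbhd B e /\ B `<=` enbhd A e] !=set0.
  exists (d%:R * (MA + MB)); split; first by rewrite mulr_ge0 // addr_ge0.
  split=> a Ha; exists 0; rewrite ?subr0 //;
    apply: le_trans (enorm_le_mx_norm _) _; apply: ler_wpM2l => //.
  - by have := AMA _ Ha; lra.
  - by have := BMB _ Ha; lra.
have [e [e0 [AB BA]] e_lt] := inf_lt H_ne hH.
exists e; split => // [a /AB [b Bb ab] | b /BA [a Aa ba]].
  by exists b => //; apply: le_trans (mx_norm_le_enorm _) ab.
by exists a => //; apply: le_trans (mx_norm_le_enorm _) ba.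
Qed.

Lemma gauge_hausdorff_close (Cn C : set V) (r k : R) :
  regular_symmetric_body Cn -> regular_symmetric_body C ->
  0 < r -> (forall z, `|z| < r -> C z) -> 0 < k -> k <= 1 ->
  hausdorff_dist Cn C < k * r / 2 ->
  forall z, `|gauge Cn z - gauge C z| <= k * gauge C z.
Proof.
move=> Cn_body C_body r0 Cr k0 k1 hH z.
have [M M0 CM] := body_bounded C_body.
have [rn rn0 Cnrn] := body_ball Cn_body.
have [Mn Mn0 CnMn] := body_bounded Cn_body.
have C0 : C 0 by apply: Cr; rewrite normr0.
have Cn0 : Cn 0 by apply: Cnrn; rewrite normr0.
have [e [e0 ekr AB BA]] := hausdorff_dist_lt_approx Cn0 C0 CnMn CM hH.
have gC_le := gauge_le_of_approx rn0 Cnrn r0 Cr (body_convex C_body) e0 AB z.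
have l0 : 0 < k / 2 by rewrite divr_gt0.
have l1 : k / 2 < 1 by rewrite ltr_pdivrMr //; lra.
have ekr' : e < k / 2 * r by rewrite mulrAC.
have gCn_le := gauge_ge_of_approx rn0 Cnrn (body_convex Cn_body) r0 Cr
  (body_convex C_body) CM l0 l1 ekr' BA z.
have g0 := gauge_ge0 r0 Cr z; have gn0 := gauge_ge0 rn0 Cnrn z.
rewrite ler_pdivlMr ?subr_gt0 // in gCn_le.
have er : e / r <= k / 2 by rewrite ler_pdivrMr // ltW.
have gC_le' : gauge C z <= gauge Cn z + k / 2 * gauge Cn z.
  by apply: le_trans gC_le _; rewrite mulrDl mul1r lerD2l ler_wpM2r.
by rewrite ler_norml; apply/andP; split; nra.
Qed.

End HausdorffGauge.

Section GaugeDerivativePerturbation.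
Variables (R : realType) (d : nat).
Local Notation V := 'rV[R]_d.
Implicit Types (w x y : V).
Variables (Cn C : set V) (r k : R).
Hypotheses (Cn_body : regular_symmetric_body Cn) (C_body : regular_symmetric_body C).
Hypotheses (r_gt0 : 0 < r) (C_ball : forall z, `|z| < r -> C z).
Hypotheses (k_ge0 : 0 <= k) (k_le1 : k <= 1).
Hypothesis gauge_close : forall z, `|gauge Cn z - gauge C z| <= k * gauge C z.
Local Notation g := (gauge C).
Local Notation gn := (gauge Cn).

Lemma dir_deriv_gauge_upper y w t e : g y = 1 -> `|w| <= 1 -> 0 < t ->
    diff_quot g y w t <= dir_deriv g y w + e ->
  dir_deriv gn y w <= dir_deriv g y w + e + k * (2 + t / r) / t.
Proof.
move=> gy w1 t0 Dini.
have shift_le : g (y + t *: w) <= 1 + t / r.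
  have := gauge_lipschitz r_gt0 C_ball (body_convex C_body) (y + t *: w) y.
  rewrite addrAC subrr add0r normrZ gtr0_norm // gy ler_norml => /andP[_].
  have : t * `|w| / r <= t / r by rewrite ler_pM2r ?invr_gt0 // ler_piMr // ltW.
  lra.
have : k * (g (y + t *: w) + g y) / t <= k * (2 + t / r) / t.
  by rewrite ler_pM2r ?invr_gt0 // ler_wpM2l // gy; lra.
have := dir_deriv_le_perturb y w (body_gauge_sublinear Cn_body) t0 gauge_close.
lra.
Qed.

Lemma dir_deriv_gauge_close y w t e : g y = 1 -> `|w| <= 1 -> 0 < t ->
    diff_quot g y w t <= dir_deriv g y w + e ->
    diff_quot g y (- w) t <= dir_deriv g y (- w) + e ->
  `|dir_deriv gn y w - dir_deriv g y w| <= e + k * (2 + t / r) / t.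
Proof.
move=> gy w1 t0 Dw DNw.
have y0 : y != 0.
  apply: contra_eq_neq gy => ->.
  by rewrite (sublinear0 (body_gauge_sublinear C_body)) eq_sym oner_eq0.
have := dir_deriv_gauge_upper gy w1 t0 Dw.
have := dir_deriv_gauge_upper gy (_ : `|- w| <= 1) t0 DNw; rewrite normrN => /(_ w1).
rewrite (dir_deriv_gaugeN Cn_body) // (dir_deriv_gaugeN C_body) //.
by rewrite ler_norml => ? ?; apply/andP; split; lra.
Qed.

Lemma gauge_close_le2 z : gn z <= 2 * g z.
Proof.
have := gauge_close z; have := gauge_ge0 r_gt0 C_ball z.
by rewrite ler_norml => g0 /andP[_ close_z]; have := ler_piMl g0 k_le1; lra.
Qed.

Lemma gauge_mul_dir_deriv_close x w t e : x != 0 -> `|x| <= 1 -> `|w| <= 1 -> 0 < t ->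
    (forall y, g y = 1 -> diff_quot g y w t <= dir_deriv g y w + e) ->
    (forall y, g y = 1 -> diff_quot g y (- w) t <= dir_deriv g y (- w) + e) ->
  `|gn x * dir_deriv gn x w - g x * dir_deriv g x w| <=
    (2 * k / r + e + k * (2 + t / r) / t) / r.
Proof.
move=> x0 x1 w1 t0 Dw DNw.
have gx := body_gauge_gt0 C_body x0.
have gx_le : g x <= r^-1.
  by apply: le_trans (gauge_le_norm r_gt0 C_ball x) _; rewrite ler_pdivrMr // mulVf ?gt_eqF.
have a0 : 0 < (g x)^-1 by rewrite invr_gt0.
have gy := gauge_normalize C_body x0.
rewrite -(dir_deriv_scale (body_gauge_sublinear C_body) x w a0).
rewrite -(dir_deriv_scale (body_gauge_sublinear Cn_body) x w a0).
set y := (g x)^-1 *: x in gy *.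
set D := dir_deriv g y w; set Dn := dir_deriv gn y w.
have D_close : `|Dn - D| <= e + k * (2 + t / r) / t.
  exact: dir_deriv_gauge_close gy w1 t0 (Dw y gy) (DNw y gy).
have Dn_le : `|Dn| <= 2 / r.
  have le2r v : `|v| <= 1 -> gn v <= 2 / r.
    move=> v1; apply: le_trans (gauge_close_le2 v) _; rewrite ler_wpM2l //.
    apply: le_trans (gauge_le_norm r_gt0 C_ball v) _.
    by rewrite ler_pdivrMr // mulVf ?gt_eqF.
  by apply: (dir_deriv_norm_le (body_gauge_sublinear Cn_body)); apply: le2r;
    rewrite ?normrN.
have gnx_close : `|gn x - g x| <= k / r.
  by apply: le_trans (gauge_close x) _; apply: ler_wpM2l.
rewrite (_ : gn x * Dn - g x * D = (gn x - g x) * Dn + g x * (Dn - D)); last by ring.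
apply: le_trans (ler_normD _ _) _; rewrite !normrM (gtr0_norm gx).
have := ler_pM (normr_ge0 _) (normr_ge0 _) gnx_close Dn_le.
have := ler_pM (ltW gx) (normr_ge0 _) gx_le D_close.
have -> : (2 * k / r + e + k * (2 + t / r) / t) / r =
    k / r * (2 / r) + r^-1 * (e + k * (2 + t / r) / t).
  by field; rewrite !gt_eqF.
lra.
Qed.

End GaugeDerivativePerturbation.

Lemma phi_entry_unif (R : realType) (d : nat) (Cs : nat -> set 'rV[R]_d)
    (C : set 'rV[R]_d) (i : 'I_d) (c : R) :
  (forall n, regular_symmetric_body (Cs n)) -> regular_symmetric_body C ->
  hausdorff_dist (Cs n) C @[n --> \oo] --> (0 : R) -> 0 < c ->
  \forall n \near \oo, forall x, unit_ball x -> `|(phi (Cs n) x - phi C x) 0 i| <= c.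
Proof.
move=> Cs_body C_body hH c0.
have [r r0 Cr] := body_ball C_body.
pose w : 'rV[R]_d := delta_mx 0 i.
have w1 : `|w| <= 1.
  apply: mx_norm_le_entries => // j.
  by rewrite mxE; case: (_ && _); rewrite ?normr1 ?normr0.
have e0 : 0 < c * r / 2 by rewrite divr_gt0 ?mulr_gt0.
have [t [t0 [Dw DNw]]] := filter_ex (filterI (nbhs_right_gt 0)
  (filterI (diff_quot_gauge_unif C_body w e0) (diff_quot_gauge_unif C_body (- w) e0))).
(* The error bound [(e + k B) / r] of [gauge_mul_dir_deriv_close], with [e = c r / 2],
   is at most [c] as soon as [k B <= c r / 2]. *)
pose B := 2 / r + (2 + t / r) / t.
have B0 : 0 < B.
  by apply: addr_gt0; apply: divr_gt0; rewrite // addr_gt0 // divr_gt0.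
pose k := Num.min 1 (c * r / (2 * B)).
have k0 : 0 < k by rewrite lt_min ltr01 !divr_gt0 ?mulr_gt0.
have k1 : k <= 1 by rewrite ge_min lexx.
have kB : k * B <= c * r / 2.
  have : k <= c * r / (2 * B) by rewrite ge_min lexx orbT.
  by rewrite ler_pdivlMr ?mulr_gt0 //; lra.
have kr0 : 0 < k * r / 2 by rewrite divr_gt0 ?mulr_gt0.
near=> n => x x1.
have close : forall z, `|gauge (Cs n) z - gauge C z| <= k * gauge C z.
  apply: gauge_hausdorff_close (Cs_body n) C_body r0 Cr k0 k1 _.
  near: n; apply: filterS (@cvgr_dist_lt _ _ _ _ eventually_filter _ _ hH _ kr0) => n.
  by rewrite sub0r normrN; apply: le_lt_trans; rewrite ler_norm.
have [->|x0] := eqVneq x 0; first by rewrite /phi eqxx subrr mxE normr0 ltW.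
rewrite !mxE (phi_gauge_entry (Cs_body n)) // (phi_gauge_entry C_body) //.
apply: le_trans (gauge_mul_dir_deriv_close (Cs_body n) C_body r0 Cr (ltW k0) k1
  close x0 (le_trans (mx_norm_le_enorm x) x1) w1 t0 Dw DNw) _.
have kBr : 2 * k / r + k * (2 + t / r) / t = k * B by rewrite /B; ring.
by rewrite ler_pdivrMr //; lra.
Unshelve. all: by end_near.
Qed.

Theorem proposition4p6 (R : realType) (d : nat)
    (Cs : nat -> set 'rV[R]_d) (C : set 'rV[R]_d) :
  (forall n, regular_symmetric_body (Cs n)) ->
  regular_symmetric_body C ->
  hausdorff_dist (Cs n) C @[n --> \oo] --> (0 : R) ->
  forall eps : R, 0 < eps ->
    \forall n \near \oo, forall x : 'rV[R]_d, unit_ball x ->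
      enorm (phi (Cs n) x - phi C x) <= eps.
Proof.
move=> Cs_body C_body hH eps eps0.
have d1 : 0 < d%:R + 1 :> R by rewrite ltr_wpDl.
have c0 : 0 < eps / (d%:R + 1) by rewrite divr_gt0.
have entries := fun i => phi_entry_unif i Cs_body C_body hH c0.
apply: filterS (filter_forall eventually_filter entries) => n entries_n x x1.
apply: le_trans (enorm_le_mx_norm _) _.
apply: le_trans (ler_wpM2l (ler0n R d)
  (mx_norm_le_entries (ltW c0) (fun i => entries_n i x x1))) _.
by rewrite mulrA ler_pdivrMr // mulrDr mulr1 mulrC lerDl ltW.
Qed.
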